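(* Fix $n\ge1$. For every $\beta>0$ there exist compact sets $A,B\subset\mathbb{R}^n$ such that $$|A|\,|A+B+B|>\beta|A+B|^2.$$
   Context: $|\cdot|$ is $n$-dimensional Lebesgue measure and $+$ is Minkowski addition. *)

From HB Require Import structures.
From mathcomp Require Import all_boot all_order all_algebra.
From mathcomp Require Import all_classical all_reals all_analysis.
Set Implicit Arguments. Unset Strict Implicit. Unset Printing Implicit Defensive.
Import Order.TTheory GRing.Theory Num.Theory.
Import numFieldNormedType.Exports.
Local Open Scope classical_set_scope.
Local Open Scope ring_scope.

(* Points of R^n are row vectors 'rV[R]_n (with the product topology from
   matrix_normedtype). *)

Definition mink_sum {R : realType} {n : nat} (A B : set 'rV[R]_n) : set 'rV[R]_n :=
  [set z | exists a, A a /\ exists b, B b /\ z = a + b].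

Definition box {R : realType} {n : nat} (a b : 'rV[R]_n) : set 'rV[R]_n :=
  [set x | forall i : 'I_n, a ord0 i <= x ord0 i <= b ord0 i].

Definition box_vol {R : realType} {n : nat} (a b : 'rV[R]_n) : R :=
  \prod_(i < n) Num.max (b ord0 i - a ord0 i) 0.

(* Lebesgue measure is the restriction of this
   outer measure to Lebesgue-measurable sets (in particular to compact sets). *)
Definition leb_n {R : realType} {n : nat} (E : set 'rV[R]_n) : \bar R :=
  ereal_inf [set s | exists (a b : nat -> 'rV[R]_n),
     E `<=` \bigcup_k box (a k) (b k) /\
     s = (\sum_(0 <= k <oo) ((box_vol (a k) (b k))%:E))%E].

From HB Require Import structures.
From mathcomp Require Import all_boot all_order all_algebra.
From mathcomp Require Import all_classical all_reals all_analysis.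
From mathcomp Require Import measurable_realfun.
From mathcomp Require Import ring lra zify.
Import Order.TTheory GRing.Theory Num.Theory.
Import numFieldNormedType.Exports.
Set Implicit Arguments. Unset Strict Implicit. Unset Printing Implicit Defensive.
Local Open Scope classical_set_scope.
Local Open Scope ring_scope.

(* Along one coordinate axis take A = [0, K^3] ∪ {q K^2 : q <= K^2} and
   B = [0, K] ∪ {j K : j < K}, thickened to [0,1] in the other directions for A
   and to {0} for B.  Then |A| >= K^3, and writing x in [0, K^4] as
   q K^2 + j K + s with s in [0, K] shows that A + B + B contains a slab of
   volume K^4.  On the other hand A + B is covered by at most 4 K^3 unit slabs:
   those over [0, K^3 + K^2], over q K^2 + [m, m + 1] with m <= K, and over
   q K^2 + j K + [0, 1].  Hence |A| |A + B + B| >= K^7 > 16 beta K^6 >=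
   beta |A + B|^2 as soon as K > 16 beta.
   The only measure theory needed is that the outer measure of a box is at
   least its volume; this goes by induction on the dimension, integrating
   over the last coordinate. *)

Section Segments.
Variable R : realType.

Lemma lebesgue_measure_segment (a b : R) :
  lebesgue_measure `[a, b]%classic = (Num.max (b - a) 0)%:E.
Proof.
rewrite lebesgue_measure_itv /= lte_fin.
have [ab|ba] := ltP a b; first by rewrite max_l ?subr_ge0 ?ltW // EFinB.
by rewrite max_r // subr_le0.
Qed.

Lemma length_le_nneseries_indic (x alpha beta : R) (v a b : nat -> R) :
  0 <= x -> (forall k, 0 <= v k) ->
  (forall t, alpha <= t <= beta ->
     (x%:E <= \sum_(0 <= k <oo) (v k * \1_(`[a k, b k]) t)%:E)%E) ->
  ((x * Num.max (beta - alpha) 0)%:E <=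
     \sum_(0 <= k <oo) (v k * Num.max (b k - a k) 0)%:E)%E.
Proof.
move=> x_ge0 v_ge0 bound.
pose J : set R := `[alpha, beta]%classic.
pose f k (t : R) := (v k * \1_(`[a k, b k]) t)%:E.
have mJ : measurable J by exact: measurable_itv.
have f0 k t : (0 <= f k t)%E by rewrite lee_fin mulr_ge0.
have mf k : measurable_fun J (f k).
  by apply/measurable_EFinP/measurable_funM => //; exact/measurable_indic/measurable_itv.
rewrite EFinM -lebesgue_measure_segment -integral_cst //.
apply: (@le_trans _ _ (\int[lebesgue_measure]_(t in J) \sum_(0 <= k <oo) f k t)%E).
  apply: ge0_le_integral => //.
  exact: (ge0_emeasurable_sum (fun k t _ _ => f0 k t) (fun k _ => mf k)).
rewrite integral_nneseries //.
apply: lee_nneseries => [k _ _|k _]; first by apply: integral_ge0 => t _.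
rewrite /f; under eq_integral do rewrite EFinM.
rewrite ge0_integralZl_EFin //; last first.
  by apply/measurable_EFinP/measurable_indic; exact: measurable_itv.
rewrite integral_indic //.
rewrite EFinM lee_wpmul2l ?lee_fin // -lebesgue_measure_segment.
exact: measureIl.
Qed.
End Segments.

Section Boxes.
Variable R : realType.

Definition row_init {n} (v : 'rV[R]_n.+1) : 'rV[R]_n := \row_j v ord0 (lift ord_max j).

Definition row_snoc {n} (v : 'rV[R]_n) (t : R) : 'rV[R]_n.+1 :=
  \row_i oapp (v ord0) t (unlift ord_max i).

Lemma box_vol_ge0 n (a b : 'rV[R]_n) : 0 <= box_vol a b.
Proof. by apply: prodr_ge0 => i _; rewrite le_max lexx orbT. Qed.

Lemma box_vol_recr n (a b : 'rV[R]_n.+1) :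
  box_vol a b = box_vol (row_init a) (row_init b) *
                Num.max (b ord0 ord_max - a ord0 ord_max) 0.
Proof.
rewrite /box_vol big_ord_recr /=; congr (_ * _); apply: eq_bigr => i _.
by rewrite !mxE; congr (Num.max (b ord0 _ - a ord0 _) 0); exact/val_inj/esym/lift_max.
Qed.

Lemma box_row_snocP n (a b : 'rV[R]_n.+1) x t :
  box a b (row_snoc x t) <->
  box (row_init a) (row_init b) x /\ a ord0 ord_max <= t <= b ord0 ord_max.
Proof.
split=> [abxt|[abx abt] i].
  split=> [i|]; last by have := abxt ord_max; rewrite mxE unlift_none.
  by have := abxt (lift ord_max i); rewrite !mxE liftK.
by rewrite mxE; case: unliftP => [j ->|->] /=; [have := abx j; rewrite !mxE|].
Qed.

Lemma box_vol_le_cover n (a b : 'rV[R]_n) (ak bk : nat -> 'rV[R]_n) (c : nat -> bool) :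
  (forall x, box a b x -> exists2 k, c k & box (ak k) (bk k) x) ->
  ((box_vol a b)%:E <= \sum_(0 <= k <oo) ((c k)%:R * box_vol (ak k) (bk k))%:E)%E.
Proof.
elim: n a b ak bk c => [|n IH] a b ak bk c cover.
  have term_ge0 k : (0 <= ((c k)%:R * box_vol (ak k) (bk k))%:E)%E.
    by rewrite lee_fin mulr_ge0 // box_vol_ge0.
  have [|k ck _] := cover 0; first by case.
  apply: le_trans (nneseries_lim_ge k.+1 (fun k _ _ => term_ge0 k)).
  rewrite big_nat_recr //= ck /box_vol !big_ord0 mul1r leeDr //.
  exact: sume_ge0.
(* The boxes whose last side contains t cover the slice of box a b at height
   t; integrating the bound given by the induction hypothesis over t
   yields the claim. *)
pose v k := (c k)%:R * box_vol (row_init (ak k)) (row_init (bk k)).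
rewrite box_vol_recr (eq_eseriesr (g := fun k => (v k *
    Num.max (bk k ord0 ord_max - ak k ord0 ord_max) 0)%:E)); last first.
  by move=> k _; rewrite box_vol_recr mulrA.
apply: (length_le_nneseries_indic (a := fun k => ak k ord0 ord_max)
                                  (b := fun k => bk k ord0 ord_max)).
- exact: box_vol_ge0.
- by move=> k; rewrite mulr_ge0 // box_vol_ge0.
move=> t abt.
have cover_t x : box (row_init a) (row_init b) x -> exists2 k,
    c k && (t \in `[ak k ord0 ord_max, bk k ord0 ord_max]%classic) &
    box (row_init (ak k)) (row_init (bk k)) x.
  move=> abx; have [|k ck /box_row_snocP[akx akt]] := cover (row_snoc x t).
    exact/box_row_snocP.
  by exists k; rewrite // ck; apply/mem_set; rewrite /= in_itv.
apply: le_trans (IH _ _ _ _ _ cover_t) _.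
by under eq_eseriesr do rewrite -mulnb natrM mulrAC -indicE.
Qed.

Lemma box_compact n (a b : 'rV[R]_n) : compact (box a b).
Proof.
have -> : box a b = [set v | forall i, `[a ord0 i, b ord0 i]%classic (v ord0 i)].
  by apply/seteqP; split=> x abx i; have := abx i; rewrite /= in_itv.
exact: (rV_compact (fun i => @segment_compact R _ _)).
Qed.

Lemma compact_boxU_bigcup n m (a b : 'rV[R]_n) (f g : nat -> 'rV[R]_n) :
  compact (box a b `|` \bigcup_(i < m) box (f i) (g i)).
Proof.
apply: compactU; first exact: box_compact.
by rewrite bigcup_mkord; apply: bigsetU_compact => i _; exact: box_compact.
Qed.

Lemma leb_n_ge0 n (S : set 'rV[R]_n) : (0 <= leb_n S)%E.
Proof.
apply: le_ereal_inf_tmp => _ [ak [bk [_ ->]]].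
by apply: nneseries_ge0 => k _ _; rewrite lee_fin box_vol_ge0.
Qed.

Lemma box_vol_le_leb_n n (a b : 'rV[R]_n) (S : set 'rV[R]_n) :
  box a b `<=` S -> ((box_vol a b)%:E <= leb_n S)%E.
Proof.
move=> abS; apply: le_ereal_inf_tmp => _ [ak [bk [cover ->]]].
under eq_eseriesr do rewrite -[box_vol _ _](mul1r _).
apply: (box_vol_le_cover (c := xpredT)) => x /abS /cover[k _ akx].
by exists k.
Qed.

Lemma leb_n_le_sum n (S : set 'rV[R]_n) (s : seq ('rV[R]_n * 'rV[R]_n)) :
  (0 < n)%N -> S `<=` [set x | exists2 p, p \in s & box p.1 p.2 x] ->
  (leb_n S <= (\sum_(p <- s) box_vol p.1 p.2)%:E)%E.
Proof.
move=> n_gt0 cover.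
(* The series pads s with an empty box, of volume 0 only because n > 0. *)
pose empty_box : 'rV[R]_n * 'rV[R]_n := (0, const_mx (-1)).
have empty_vol : box_vol empty_box.1 empty_box.2 = 0.
  rewrite /box_vol (eq_bigr (fun=> 0)) ?prodr_const ?card_ord ?expr0n ?gtn_eqF //.
  by move=> i _; rewrite !mxE subr0 max_r // lerN10.
apply: (@le_trans _ _ (\sum_(0 <= k <oo)
    (box_vol (nth empty_box s k).1 (nth empty_box s k).2)%:E)%E).
  apply: ereal_inf_lbound; exists (fun k => (nth empty_box s k).1),
    (fun k => (nth empty_box s k).2); split => // x /cover[p ps px].
  by exists (index p s); rewrite // nth_index.
rewrite (nneseries_split 0 (size s)); last by move=> k _; rewrite lee_fin box_vol_ge0.
rewrite add0n eseries0 ?adde0 => [|k sk _]; last by rewrite nth_default ?empty_vol.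
by rewrite sumEFin (big_nth empty_box).
Qed.
End Boxes.

Lemma floor_mul_decomp (R : archiRealFieldType) (k x : R) :
  0 < k -> 0 <= x -> exists q : nat, q%:R * k <= x < q%:R * k + k.
Proof.
move=> k_gt0 x_ge0; exists (Num.truncn (x / k)).
have /andP[qx xq] := truncn_itv (divr_ge0 x_ge0 (ltW k_gt0)).
by rewrite -ler_pdivlMr // qx /= -[X in _ + X]mul1r -mulrDl natr1 -ltr_pdivrMr.
Qed.

Lemma floor_le_nat (R : archiRealFieldType) (N : nat) (t : R) :
  0 <= t <= N%:R -> exists2 m, (m <= N)%N & m%:R <= t <= m%:R + 1.
Proof.
move=> /andP[t_ge0 t_le]; have [m] := floor_mul_decomp ltr01 t_ge0.
rewrite !mulr1 => /andP[mt tm]; exists m; last by rewrite mt ltW.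
by rewrite -(ler_nat R); exact: le_trans t_le.
Qed.

Section Construction.
Variables (R : realType) (n : nat) (i0 : 'I_n) (K : nat).
Let kr : R := K%:R.

(* box (lo l) (hi r) is the slab [l, r] x [0, 1]^(n-1) and box (lo l) (lo r)
   the segment [l, r] x {0}^(n-1), the first factor being along axis i0. *)
Definition lo (l : R) : 'rV[R]_n := \row_i (if i == i0 then l else 0).
Definition hi (r : R) : 'rV[R]_n := \row_i (if i == i0 then r else 1).

Lemma box_lo_hiP l r z : box (lo l) (hi r) z <->
  l <= z ord0 i0 <= r /\ forall i, i != i0 -> 0 <= z ord0 i <= 1.
Proof.
split=> [lrz|[lrz0 z_unit] i].
  split=> [|i /negbTE i_neq]; first by have := lrz i0; rewrite !mxE eqxx.
  by have := lrz i; rewrite !mxE i_neq.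
by rewrite !mxE; case: eqP => [->|/eqP]; [|exact: z_unit].
Qed.

Lemma box_lo_loP l r z : box (lo l) (lo r) z <->
  l <= z ord0 i0 <= r /\ forall i, i != i0 -> z ord0 i = 0.
Proof.
split=> [lrz|[lrz0 z_axis] i].
  split=> [|i /negbTE i_neq]; first by have := lrz i0; rewrite !mxE eqxx.
  by apply/esym/le_anti; have := lrz i; rewrite !mxE i_neq.
by rewrite !mxE; case: eqP => [->|/eqP /z_axis ->] //; rewrite lexx.
Qed.

Lemma box_vol_lo_hi l r : l <= r -> box_vol (lo l) (hi r) = r - l.
Proof.
move=> lr; rewrite /box_vol (bigD1 i0) //= !mxE eqxx max_l ?subr_ge0 //.
by rewrite big1 ?mulr1 // => i /negbTE i_neq; rewrite !mxE i_neq subr0 max_l.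
Qed.

Lemma leb_n_ge_box_lo_hi r (S : set 'rV[R]_n) :
  0 <= r -> box (lo 0) (hi r) `<=` S -> (r%:E <= leb_n S)%E.
Proof.
by move=> r_ge0 rS; rewrite -[r]subr0 -box_vol_lo_hi //; exact: box_vol_le_leb_n.
Qed.

Definition Aset : set 'rV[R]_n := box (lo 0) (hi (kr ^+ 3)) `|`
  \bigcup_(q < (K ^ 2).+1) box (lo (q%:R * kr ^+ 2)) (hi (q%:R * kr ^+ 2)).

Definition Bset : set 'rV[R]_n := box (lo 0) (lo kr) `|`
  \bigcup_(j < K) box (lo (j%:R * kr)) (lo (j%:R * kr)).

Lemma box_sub_sumsetABB : (0 < K)%N ->
  box (lo 0) (hi (kr ^+ 4)) `<=` mink_sum (mink_sum Aset Bset) Bset.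
Proof.
move=> K_gt0 z /box_lo_hiP[/andP[x_ge0 x_le] z_unit].
set x := z ord0 i0 in x_ge0 x_le.
have kr_gt0 : 0 < kr by rewrite ltr0n.
have kr2_gt0 : 0 < kr ^+ 2 by rewrite exprn_gt0.
have [q /andP[qx xq]] := floor_mul_decomp kr2_gt0 x_ge0.
have q_le : (q <= K ^ 2)%N.
  rewrite -(ler_nat R) -(ler_pM2r kr2_gt0) natrX -/kr -exprD.
  exact: le_trans qx x_le.
have r_ge0 : 0 <= x - q%:R * kr ^+ 2 by rewrite subr_ge0.
have [j /andP[jx xj]] := floor_mul_decomp kr_gt0 r_ge0.
have j_lt : (j < K)%N.
  rewrite -(ltr_nat R) -(ltr_pM2r kr_gt0) -/kr -expr2.
  by apply: le_lt_trans jx _; lra.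
pose s := x - q%:R * kr ^+ 2 - j%:R * kr.
exists (z - lo s); split; last first.
  exists (lo s); split; last by rewrite subrK.
  left; apply/box_lo_loP; rewrite mxE eqxx; split=> [|i /negbTE i_neq].
    by rewrite /s; apply/andP; split; lra.
  by rewrite mxE i_neq.
exists (z - lo s - lo (j%:R * kr)); split; last first.
  exists (lo (j%:R * kr)); split; last by rewrite subrK.
  right; exists j => //; apply/box_lo_loP; rewrite mxE eqxx lexx.
  by split=> // i /negbTE i_neq; rewrite mxE i_neq.
right; exists q; first by rewrite /= ltnS.
apply/box_lo_hiP; rewrite !mxE eqxx; split=> [|i /[dup] /negbTE i_neq /z_unit].
  by rewrite /s -/x; apply/andP; split; lra.
by rewrite !mxE i_neq !subr0.
Qed.

Definition left_ends : seq R :=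
  [seq m%:R | m <- iota 0 (K ^ 3 + K ^ 2).+1] ++
  [seq q%:R * kr ^+ 2 + m%:R | q <- iota 0 (K ^ 2).+1, m <- iota 0 K.+1] ++
  [seq q%:R * kr ^+ 2 + j%:R * kr | q <- iota 0 (K ^ 2).+1, j <- iota 0 K].

Lemma size_left_ends :
  size left_ends = ((K ^ 3 + K ^ 2).+1 + (K ^ 2).+1 * K.+1 + (K ^ 2).+1 * K)%N.
Proof. by rewrite 2!size_cat size_map !size_allpairs !size_iota addnA. Qed.

Lemma sum_mem_left_ends (x y : R) :
  0 <= x <= kr ^+ 3 \/ (exists2 q, (q <= K ^ 2)%N & x = q%:R * kr ^+ 2) ->
  0 <= y <= kr \/ (exists2 j, (j < K)%N & y = j%:R * kr) ->
  exists2 l, l \in left_ends & l <= x + y <= l + 1.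
Proof.
have y_le : 0 <= y <= kr \/ (exists2 j, (j < K)%N & y = j%:R * kr) ->
    0 <= y <= kr ^+ 2.
  case=> [/andP[y_ge0 y_le]|[j j_lt ->]]; apply/andP; split=> //.
  - by apply: le_trans y_le _; rewrite -natrX ler_nat; nia.
  - exact: mulr_ge0.
  - by rewrite expr2 ler_wpM2r // ler_nat ltnW.
case=> [/andP[x_ge0 x_le]|[q q_le ->]] y_cases.
- have /andP[y_ge0 y_le2] := y_le y_cases.
  have [|m m_le mxy] := @floor_le_nat _ (K ^ 3 + K ^ 2) (x + y).
    by rewrite natrD !natrX -/kr addr_ge0 //=; lra.
  exists m%:R => //; rewrite /left_ends 2!mem_cat; apply/or3P/Or31.
  by apply: map_f; rewrite mem_iota ltnS.
case: y_cases => [/floor_le_nat[m m_le my]|[j j_lt ->]].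
  exists (q%:R * kr ^+ 2 + m%:R); last by rewrite -addrA !lerD2l.
  rewrite /left_ends 2!mem_cat; apply/or3P/Or32.
  apply: (allpairs_f (fun q m : nat => q%:R * kr ^+ 2 + m%:R));
    by rewrite mem_iota ltnS.
exists (q%:R * kr ^+ 2 + j%:R * kr); last by rewrite lexx lerDl ler01.
rewrite /left_ends 2!mem_cat; apply/or3P/Or33.
apply: (allpairs_f (fun q j : nat => q%:R * kr ^+ 2 + j%:R * kr));
  by rewrite mem_iota.
Qed.

Lemma sumsetAB_sub_unit_boxes : mink_sum Aset Bset `<=`
  [set z | exists2 p, p \in [seq (lo l, hi (l + 1)) | l <- left_ends] & box p.1 p.2 z].
Proof.
move=> z [a [Aa [b [Bb ->]]]].
have [a_unit a_cases] : (forall i, i != i0 -> 0 <= a ord0 i <= 1) /\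
    (0 <= a ord0 i0 <= kr ^+ 3 \/
     exists2 q, (q <= K ^ 2)%N & a ord0 i0 = q%:R * kr ^+ 2).
  case: Aa => [/box_lo_hiP[a0 a_unit]|[q q_le /box_lo_hiP[/le_anti a0 a_unit]]].
    by split=> //; left.
  by split=> //; right; exists q.
have [b_axis b_cases] : (forall i, i != i0 -> b ord0 i = 0) /\
    (0 <= b ord0 i0 <= kr \/ exists2 j, (j < K)%N & b ord0 i0 = j%:R * kr).
  case: Bb => [/box_lo_loP[b0 b_axis]|[j j_lt /box_lo_loP[/le_anti b0 b_axis]]].
    by split=> //; left.
  by split=> //; right; exists j.
have [l l_in lab] := sum_mem_left_ends a_cases b_cases.
exists (lo l, hi (l + 1)); first exact: map_f.
apply/box_lo_hiP; rewrite mxE; split=> // i i_neq.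
by rewrite mxE b_axis ?addr0 //; exact: a_unit.
Qed.

Lemma leb_n_sumsetAB_le : (0 < n)%N ->
  (leb_n (mink_sum Aset Bset) <= (size left_ends)%:R%:E)%E.
Proof.
move=> n_gt0; apply: le_trans (leb_n_le_sum n_gt0 sumsetAB_sub_unit_boxes) _.
rewrite big_map (eq_bigr (fun=> 1)) => [|l _]; last first.
  by rewrite box_vol_lo_hi ?lerDl // addrC addKr.
by rewrite -sum1_size natr_sum.
Qed.

End Construction.

Theorem lemma4p19 (R : realType) (n : nat) (hn : (1 <= n)%N) (beta : R) (hbeta : 0 < beta) :
  exists A B : set 'rV[R]_n, compact A /\ compact B /\
    (leb_n A * leb_n (mink_sum (mink_sum A B) B) >
       beta%:E * (leb_n (mink_sum A B)) ^+ 2)%E.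
Proof.
(* K > 16 beta, and K >= 3 so that size left_ends <= 4 K^3. *)
pose i0 : 'I_n := Ordinal hn; pose K := (Num.truncn (16 * beta)).+3; pose kr : R := K%:R.
have kr_gt0 : 0 < kr by rewrite ltr0n.
have beta_lt : 16 * beta < kr.
  have /andP[_ lt] := truncn_itv (mulr_ge0 (ler0n R 16) (ltW hbeta)).
  by apply: lt_le_trans lt _; rewrite ler_nat ltnW.
exists (Aset i0 K), (Bset i0 K); set A := Aset i0 K; set B := Bset i0 K.
split; first exact: compact_boxU_bigcup; split; first exact: compact_boxU_bigcup.
have A_ge : ((kr ^+ 3)%:E <= leb_n A)%E.
  by apply: (leb_n_ge_box_lo_hi (S := A)) => [|z Az]; [rewrite exprn_ge0 ?ltW|left].
have ABB_ge : ((kr ^+ 4)%:E <= leb_n (mink_sum (mink_sum A B) B))%E.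
  by apply: leb_n_ge_box_lo_hi; [rewrite exprn_ge0 ?ltW|exact: box_sub_sumsetABB].
have AB_le : (leb_n (mink_sum A B) <= (4 * kr ^+ 3)%:E)%E.
  apply: le_trans (leb_n_sumsetAB_le _ i0 K hn) _.
  by rewrite lee_fin size_left_ends -natrX -natrM ler_nat /K; nia.
apply: (@le_lt_trans _ _ (beta * (4 * kr ^+ 3) ^+ 2)%:E).
  rewrite EFinM EFin_expe; apply: lee_wpmul2l; first by rewrite lee_fin ltW.
  by rewrite lee_sqr ?leb_n_ge0 // lee_fin mulr_ge0 ?exprn_ge0 ?ltW.
apply: (@lt_le_trans _ _ (kr ^+ 3 * kr ^+ 4)%:E); last first.
  by rewrite EFinM lee_pmul // lee_fin exprn_ge0 ?ltW.
have -> : beta * (4 * kr ^+ 3) ^+ 2 = 16 * beta * kr ^+ 6 by ring.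
have -> : kr ^+ 3 * kr ^+ 4 = kr * kr ^+ 6 by ring.
by rewrite lte_fin ltr_pM2r // exprn_gt0.
Qed.
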